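(* Let $Q\in\mathbb{R}^{n\times n}$ be symmetric positive definite, $A\in\mathbb{R}^{m\times n}$ with no zero rows, $b\in\mathbb{R}^m$, $c\in\mathbb{R}^n$, and suppose the problem $P(Q,A,b,c)$: $\min_{x\in\mathbb{R}^n}\frac12 x^\intercal Qx+c^\intercal x$ s.t. $Ax\preceq b$ is feasible, with optimal solution $x^\ast$. Let $\mu^\ast$ be an optimal solution of the dual problem $\max_{\mu\succeq 0} g(\mu)$, where $g(\mu)=-\frac12(A^\intercal\mu+c)^\intercal Q^{-1}(A^\intercal\mu+c)-\mu^\intercal b$, and let $t:=\operatorname{sign}(\mu^\ast+\nabla g(\mu^\ast))\in\{+1,-1,0\}^m$ (componentwise), where $\nabla g(\mu)=-AQ^{-1}(A^\intercal\mu+c)-b$. Suppose an adversary (the target node) knows $A$, $Q$, $x^\ast$ and $t$. Then $c$ cannot be uniquely retrieved by the adversary — i.e., there exist $c'\in\mathbb{R}^n$ with $c'\neq c$, $b'\in\mathbb{R}^m$, and an optimal solution $\mu'$ of the dual of $P(Q,A,b',c')$ (dual function $g'$ defined as $g$ with $b',c'$ in place of $b,c$) such that $x^\ast$ is the optimal solution of $P(Q,A,b',c')$ and $\operatorname{sign}(\mu'+\nabla g'(\mu'))=t$ — if and only if $t_i>0$ for some $i\in\{1,\dots,m\}$.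
   Context: Vector inequalities $\preceq,\succeq$ are element-wise. The paper's notion of non-unique retrieval: a private input cannot be uniquely retrieved by an adversary if there are at least two values of it, each consistent (together with some values of the other data unknown to the adversary) with everything the adversary knows; the claim makes this explicit for the knowledge $(A,Q,x^\ast,t)$. *)

From HB Require Import structures.
From mathcomp Require Import all_boot all_order all_algebra.
From mathcomp Require Import reals.
Set Implicit Arguments. Unset Strict Implicit. Unset Printing Implicit Defensive.
Import Order.TTheory GRing.Theory Num.Theory.
Local Open Scope ring_scope.

Section QP.
Variables (R : realType) (n m : nat).
Implicit Types (Q : 'M[R]_n) (A : 'M[R]_(m, n)) (b mu nu : 'cV[R]_m)
  (c x y : 'cV[R]_n).

Definition symmetric_mx Q : Prop := Q^T = Q.
Definition posdef_mx Q : Prop :=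
  forall x : 'cV[R]_n, x != 0 -> 0 < (x^T *m Q *m x) ord0 ord0.
Definition no_zero_rows A : Prop := forall i : 'I_m, row i A != 0.

Definition qp_obj Q c x : R :=
  2^-1 * (x^T *m Q *m x) ord0 ord0 + (c^T *m x) ord0 ord0.
Definition qp_feasible A b x : Prop := forall i : 'I_m, (A *m x) i ord0 <= b i ord0.
Definition qp_optimal Q A b c x : Prop :=
  qp_feasible A b x /\ forall y, qp_feasible A b y -> qp_obj Q c x <= qp_obj Q c y.
Definition qp_is_feasible A b : Prop := exists x, qp_feasible A b x.

Definition dual_fun Q A b c mu : R :=
  - (2^-1 * ((A^T *m mu + c)^T *m invmx Q *m (A^T *m mu + c)) ord0 ord0)
  - (mu^T *m b) ord0 ord0.
Definition dual_grad Q A b c mu : 'cV[R]_m :=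
  - (A *m invmx Q *m (A^T *m mu + c)) - b.
Definition nonneg_vec (v : 'cV[R]_m) : Prop := forall i : 'I_m, 0 <= v i ord0.
Definition dual_optimal Q A b c mu : Prop :=
  nonneg_vec mu /\ forall nu, nonneg_vec nu -> dual_fun Q A b c nu <= dual_fun Q A b c mu.

Definition sign_vec (v : 'cV[R]_m) : 'cV[R]_m := map_mx Num.sg v.

Definition sign_pattern Q A b c mu : 'cV[R]_m :=
  sign_vec (mu + dual_grad Q A b c mu).
End QP.

(* Everything rests on the KKT conditions of the dual: mu is dual optimal iff
   mu >= 0, grad g(mu) <= 0 and mu_i * grad_i g(mu) = 0, and then the primal
   optimum is x* = -Q^-1 (A^T mu + c).  Consequently t_i > 0 exactly when
   mu*_i > 0.  If no t_i is positive, then mu* = 0 and likewise mu' = 0, so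
   x* = -Q^-1 c = -Q^-1 c' forces c' = c.  If mu*_i > 0, replacing c by
   c - A^T e_i and mu* by mu* + e_i leaves A^T mu + c, hence grad g and x*,
   unchanged; the KKT conditions and the sign pattern survive because
   grad_i g vanishes at mu*, and c changes because row i of A is nonzero. *)

From HB Require Import structures.
From mathcomp Require Import all_boot all_order all_algebra.
From mathcomp Require Import reals ring lra.
Import Order.TTheory GRing.Theory Num.Theory.
Local Open Scope ring_scope.
Set Implicit Arguments. Unset Strict Implicit. Unset Printing Implicit Defensive.

Lemma quad_formD (R : comPzRingType) p (M : 'M[R]_p) (u d : 'cV[R]_p) : M^T = M ->
  ((u + d)^T *m M *m (u + d)) ord0 ord0 =
  (u^T *m M *m u) ord0 ord0 + (u^T *m M *m d) ord0 ord0 *+ 2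
  + (d^T *m M *m d) ord0 ord0.
Proof.
move=> sM; rewrite !linearD /= !mulmxDl ![(_ + _ : 'M_1) ord0 ord0]mxE.
have -> : d^T *m M *m u = (u^T *m M *m d)^T by rewrite !trmx_mul trmxK sM mulmxA.
by rewrite [_^T ord0 ord0]mxE mulr2n !addrA.
Qed.

Lemma delta_colE (R : pzSemiRingType) m (i j : 'I_m) :
  delta_mx i (ord0 : 'I_1) j ord0 = (j == i)%:R :> R.
Proof. by rewrite mxE eqxx andbT. Qed.

Lemma dotmx_le0 (R : numDomainType) p (v w : 'cV[R]_p) :
  (forall i, v i ord0 * w i ord0 <= 0) -> (v^T *m w) ord0 ord0 <= 0.
Proof. by move=> vw; rewrite mxE sumr_le0 // => i _; rewrite mxE. Qed.

Lemma concave_quad_pos (R : realFieldType) (d w k : R) : 0 <= k -> 0 < d * w ->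
  exists2 t, 0 < t <= 1 & 0 < t * d * w - 2^-1 * (t * d * (t * d) * k).
Proof.
move=> k0 p0; have q0 : 0 <= d * d * k by nra.
set p := d * w in p0 *; set q := d * d * k in q0 *; set t := p / (p + q).
have pq0 : 0 < p + q by rewrite ltr_wpDr.
have t0 : 0 < t by rewrite divr_gt0.
have tq : t * q <= p by rewrite mulrAC ler_pdivrMr // ler_pM2l // lerDr ltW.
exists t; first by rewrite t0 /t ler_pdivrMr // mul1r lerDl.
have -> : t * d * w - 2^-1 * (t * d * (t * d) * k) = t * (p - 2^-1 * (t * q)).
  by rewrite /p /q; ring.
rewrite mulr_gt0 //; lra.
Qed.

Lemma concave_quad_max0 (R : realFieldType) (a w k : R) : 0 <= a -> 0 <= k ->
  (forall s, - a <= s -> s * w - 2^-1 * (s * s * k) <= 0) -> w <= 0 /\ a * w = 0.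
Proof.
move=> a0 k0 le0.
have dir_le0 d : - a <= d -> d * w <= 0.
  move=> ad; rewrite leNgt; apply/negP => /(concave_quad_pos k0) [t /andP[t0 t1]].
  have : - a <= t * d by case: (leP 0 d) => d0; nra.
  by move=> /le0; lra.
have w_le0 : w <= 0 by have := dir_le0 1; lra.
by split=> //; have := dir_le0 (- a) (lexx _); nra.
Qed.

Section PositiveDefinite.
Variables (R : realType) (n : nat) (Q : 'M[R]_n).
Hypothesis pQ : posdef_mx Q.

Lemma posdef_mx_unit : Q \in unitmx.
Proof.
rewrite unitmxE unitfE; apply/negP => /det0P [v v0 vQ].
have /pQ : v^T != 0 by rewrite trmx_eq0.
by rewrite trmxK vQ mul0mx mxE ltxx.
Qed.

Lemma posdef_mx_ge0 (h : 'cV[R]_n) : 0 <= (h^T *m Q *m h) ord0 ord0.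
Proof. by have [->|/pQ/ltW] := eqVneq h 0; rewrite ?mulmx0 ?mxE. Qed.

Hypothesis sQ : symmetric_mx Q.

Lemma symmetric_invmx : symmetric_mx (invmx Q).
Proof. by rewrite /symmetric_mx trmx_inv sQ. Qed.

Lemma posdef_invmx_ge0 (z : 'cV[R]_n) : 0 <= (z^T *m invmx Q *m z) ord0 ord0.
Proof.
have -> : z^T *m invmx Q *m z = (invmx Q *m z)^T *m Q *m (invmx Q *m z).
  rewrite trmx_mul symmetric_invmx -!mulmxA (mulmxA Q).
  by rewrite mulmxV ?posdef_mx_unit ?mul1mx.
exact: posdef_mx_ge0.
Qed.

End PositiveDefinite.

Section QuadraticProgram.
Variables (R : realType) (n m : nat) (Q : 'M[R]_n) (A : 'M[R]_(m, n)).
Hypotheses (sQ : symmetric_mx Q) (pQ : posdef_mx Q).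
Implicit Types (b mu v : 'cV[R]_m) (c x y : 'cV[R]_n).

(* The minimiser of the Lagrangian x |-> qp_obj Q c x + mu^T (A x - b). *)
Definition primal_of_dual c mu := - (invmx Q *m (A^T *m mu + c)).

Definition dual_kkt b c mu : Prop := nonneg_vec mu /\ forall j,
  dual_grad Q A b c mu j ord0 <= 0 /\ mu j ord0 * dual_grad Q A b c mu j ord0 = 0.

Lemma dual_funD b c mu v : dual_fun Q A b c (mu + v) =
  dual_fun Q A b c mu + (v^T *m dual_grad Q A b c mu) ord0 ord0
  - 2^-1 * ((A^T *m v)^T *m invmx Q *m (A^T *m v)) ord0 ord0.
Proof.
rewrite /dual_fun /dual_grad; set u := A^T *m mu + c.
have -> : A^T *m (mu + v) + c = u + A^T *m v by rewrite mulmxDr addrAC.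
rewrite quad_formD ?symmetric_invmx // [(mu + v)^T]linearD /= mulmxDl mulmxBr mulmxN.
have -> : v^T *m (A *m invmx Q *m u) = (u^T *m invmx Q *m (A^T *m v))^T.
  by rewrite !trmx_mul !trmxK symmetric_invmx // !mulmxA.
rewrite ![(_ + _ : 'M_1) ord0 ord0]mxE ![(- _ : 'M_1) ord0 ord0]mxE.
rewrite [_^T ord0 ord0]mxE; lra.
Qed.

Lemma dual_optimalP b c mu : dual_optimal Q A b c mu <-> dual_kkt b c mu.
Proof.
split=> [[mu0 opt] | [mu0 kkt]].
  split=> // j; set e : 'cV[R]_m := delta_mx j ord0.
  apply: (concave_quad_max0 _ (posdef_invmx_ge0 pQ sQ (A^T *m e))); first exact: mu0.
  move=> s js; have mu_se0 : nonneg_vec (mu + s *: e).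
    move=> i; rewrite !mxE andbT; have [->|_] := eqVneq i j; last by rewrite mulr0 addr0.
    by rewrite mulr1; lra.
  have := opt _ mu_se0; rewrite dual_funD -scalemxAr.
  rewrite [(s *: e)^T]linearZ [(s *: _)^T]linearZ /= -!scalemxAl -scalemxAr.
  rewrite ![(_ *: _ : 'M_1) ord0 ord0]mxE mulrA trmx_delta -rowE mxE.
  lra.
split=> // nu nu0; rewrite -(subrKC mu nu) dual_funD.
have := posdef_invmx_ge0 pQ sQ (A^T *m (nu - mu)).
suff : ((nu - mu)^T *m dual_grad Q A b c mu) ord0 ord0 <= 0 by lra.
apply: dotmx_le0 => i; rewrite [(_ - _ : 'cV_m) i ord0]mxE [(- _ : 'cV_m) i ord0]mxE.
have [g_le0 mg0] := kkt i.
by rewrite mulrBl mg0 subr0 mulr_ge0_le0 ?nu0.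
Qed.

Lemma qp_objD c x h : qp_obj Q c (x + h) =
  qp_obj Q c x + ((Q *m x + c)^T *m h) ord0 ord0
  + 2^-1 * (h^T *m Q *m h) ord0 ord0.
Proof.
rewrite /qp_obj quad_formD // [(_ + c)^T]linearD /= mulmxDl mulmxDr.
rewrite trmx_mul sQ ![(_ + _ : 'M_1) ord0 ord0]mxE; lra.
Qed.

Lemma mul_primal_of_dual b c mu :
  A *m primal_of_dual c mu = dual_grad Q A b c mu + b.
Proof. by rewrite /primal_of_dual /dual_grad mulmxN mulmxA subrK. Qed.

Lemma primal_of_dual_feasible b c mu :
  dual_kkt b c mu -> qp_feasible A b (primal_of_dual c mu).
Proof.
by move=> [_ kkt] j; rewrite (mul_primal_of_dual b) mxE gerDr; case: (kkt j).
Qed.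

Lemma qp_obj_growth b c mu y : dual_kkt b c mu -> qp_feasible A b y ->
  qp_obj Q c (primal_of_dual c mu) + 2^-1 *
    ((y - primal_of_dual c mu)^T *m Q *m (y - primal_of_dual c mu)) ord0 ord0
  <= qp_obj Q c y.
Proof.
move=> [mu0 kkt] yb; set x := primal_of_dual c mu.
rewrite -[in leRHS](subrKC x y) qp_objD.
have -> : Q *m x + c = - (A^T *m mu).
  rewrite /x /primal_of_dual mulmxN mulmxA mulmxV ?posdef_mx_unit //.
  by rewrite mul1mx opprD addrNK.
suff : ((A^T *m mu)^T *m (y - x)) ord0 ord0 <= 0.
  by rewrite [(- _)^T]linearN /= mulNmx [(- _ : 'M_1) ord0 ord0]mxE; lra.
rewrite trmx_mul trmxK -mulmxA; apply: dotmx_le0 => i.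
rewrite mulmxBr (mul_primal_of_dual b) [(_ - _ : 'cV_m) i ord0]mxE.
rewrite [(- _ : 'cV_m) i ord0]mxE [(_ + _ : 'cV_m) i ord0]mxE.
rewrite opprD addrA addrAC mulrBr (proj2 (kkt i)) subr0.
by rewrite mulr_ge0_le0 ?mu0 // subr_le0.
Qed.

Lemma qp_optimal_primal_of_dual b c mu :
  dual_kkt b c mu -> qp_optimal Q A b c (primal_of_dual c mu).
Proof.
move=> kkt; split=> [|y yb]; first exact: primal_of_dual_feasible.
have := qp_obj_growth kkt yb; have := posdef_mx_ge0 pQ (y - primal_of_dual c mu).
lra.
Qed.

Lemma qp_optimal_eq b c mu x : qp_optimal Q A b c x -> dual_kkt b c mu ->
  x = primal_of_dual c mu.
Proof.
move=> [xb xopt] kkt; apply/eqP; rewrite -subr_eq0; apply/negPn/negP.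
move=> /pQ; have := xopt _ (primal_of_dual_feasible kkt).
have := qp_obj_growth kkt xb; lra.
Qed.

Lemma primal_of_dual_inj mu : injective (primal_of_dual ^~ mu).
Proof.
move=> c c' /oppr_inj /(can_inj (mulKVmx (posdef_mx_unit pQ))); exact: addrI.
Qed.

Lemma dual_kkt_grad_eq0 b c mu i : dual_kkt b c mu -> 0 < mu i ord0 ->
  dual_grad Q A b c mu i ord0 = 0.
Proof.
by move=> [_ /(_ i) [_ /eqP]]; rewrite mulf_eq0 => /orP[/eqP->|/eqP]; rewrite ?ltxx.
Qed.

Lemma sign_pattern_gt0 b c mu i : dual_kkt b c mu ->
  (0 < sign_pattern Q A b c mu i ord0) = (0 < mu i ord0).
Proof.
move=> kkt; rewrite mxE sgr_gt0 [(_ + _ : 'cV_m) i ord0]mxE.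
have [mu_i0|] := ltP 0 (mu i ord0); first by rewrite dual_kkt_grad_eq0 // addr0.
have [_ /(_ i) [g0 _]] := kkt; lra.
Qed.

Lemma dual_kkt_eq0 b c mu : dual_kkt b c mu ->
  (forall i, sign_pattern Q A b c mu i ord0 <= 0) -> mu = 0.
Proof.
move=> kkt t_le0; apply/matrixP => i j; rewrite ord1 mxE.
by apply/eqP; rewrite eq_le kkt.1 andbT leNgt -(sign_pattern_gt0 _ kkt) -leNgt.
Qed.

Lemma dual_grad_shift b c mu v :
  dual_grad Q A b (c - A^T *m v) (mu + v) = dual_grad Q A b c mu.
Proof. by rewrite /dual_grad [A^T *m _]mulmxDr addrACA subrr addr0. Qed.

Lemma primal_of_dual_shift c mu v :
  primal_of_dual (c - A^T *m v) (mu + v) = primal_of_dual c mu.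
Proof. by rewrite /primal_of_dual [A^T *m _]mulmxDr addrACA subrr addr0. Qed.

Lemma dual_kkt_shift b c mu i : dual_kkt b c mu -> 0 < mu i ord0 ->
  let e := delta_mx i ord0 in dual_kkt b (c - A^T *m e) (mu + e).
Proof.
move=> [mu0 kkt] mu_i0 e; rewrite /dual_kkt dual_grad_shift.
split=> j; first by rewrite [(_ + _ : 'cV_m) j ord0]mxE delta_colE addr_ge0 ?mu0.
rewrite [(mu + e) j ord0]mxE delta_colE.
have [->|_] := eqVneq j i; last by rewrite addr0.
by rewrite dual_kkt_grad_eq0 // mulr0; split.
Qed.

Lemma sign_pattern_shift b c mu i : dual_kkt b c mu -> 0 < mu i ord0 ->
  let e := delta_mx i ord0 in
  sign_pattern Q A b (c - A^T *m e) (mu + e) = sign_pattern Q A b c mu.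
Proof.
move=> kkt mu_i0 e; apply/colP => j; rewrite [LHS]mxE [RHS]mxE.
rewrite dual_grad_shift addrAC [(_ + e) j ord0]mxE delta_colE.
have [->|_] := eqVneq j i; last by rewrite addr0.
by rewrite [(mu + _) i ord0]mxE dual_kkt_grad_eq0 // addr0 !gtr0_sg ?ltr_wpDr ?ler0n.
Qed.

Lemma cost_shift_neq c i : no_zero_rows A -> c - A^T *m delta_mx i ord0 != c.
Proof.
move=> nzA; rewrite -subr_eq0 addrAC subrr add0r oppr_eq0.
by rewrite -trmx_delta -trmx_mul -rowE trmx_eq0 nzA.
Qed.

End QuadraticProgram.

Unset Implicit Arguments.

Theorem proposition6 (R : realType) (n m : nat)
  (Q : 'M[R]_n) (A : 'M[R]_(m, n)) (b : 'cV[R]_m) (c : 'cV[R]_n)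
  (xstar : 'cV[R]_n) (mustar : 'cV[R]_m) :
  symmetric_mx Q -> posdef_mx Q -> no_zero_rows A ->
  qp_is_feasible A b ->
  qp_optimal Q A b c xstar ->
  dual_optimal Q A b c mustar ->
  let t := sign_pattern Q A b c mustar in
  (exists (c' : 'cV[R]_n) (b' : 'cV[R]_m) (mu' : 'cV[R]_m),
      c' != c /\ qp_optimal Q A b' c' xstar /\ dual_optimal Q A b' c' mu' /\
      sign_pattern Q A b' c' mu' = t)
  <-> (exists i : 'I_m, 0 < t i ord0).
Proof.
move=> sQ pQ nzA _ xopt /(dual_optimalP A sQ pQ) kkt t.
have xE := qp_optimal_eq sQ pQ xopt kkt.
split=> [[c' [b' [mu' [c'_neq [xopt' [/(dual_optimalP A sQ pQ) kkt' t'E]]]]]] | [i]].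
  apply/existsP; apply: contraNT c'_neq => /existsPn t_le0.
  have mu_eq0 : mustar = 0 by apply: dual_kkt_eq0 kkt _ => i; rewrite leNgt t_le0.
  have mu'_eq0 : mu' = 0 by apply: dual_kkt_eq0 kkt' _ => i; rewrite t'E leNgt t_le0.
  have := qp_optimal_eq sQ pQ xopt' kkt'; rewrite xE mu_eq0 mu'_eq0.
  by move/primal_of_dual_inj => ->.
rewrite /t sign_pattern_gt0 // => mu_i0; set e : 'cV[R]_m := delta_mx i ord0.
exists (c - A^T *m e), b, (mustar + e).
have kkt' := dual_kkt_shift kkt mu_i0.
rewrite xE -(primal_of_dual_shift Q A c mustar e).
split; first exact: cost_shift_neq.
split; first exact: qp_optimal_primal_of_dual.
by split; [apply/(dual_optimalP A sQ pQ) | exact: sign_pattern_shift].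
Qed.
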